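(* Let $\lambda\in(0,1)$ and let $G$ be a finite simple connected graph with $n$ vertices. Then $$\frac{\lambda^{n}-\lambda}{\lambda-1}\;\le\; mc^{e}_{\lambda}(G).$$ The lower bound is attained for the path $P_n$, at an end-vertex.
   Context: $d(u,v)$ denotes graph distance and $[u]$ the set of neighbours of $u$. For vertices $k,l$, $s^{kl}$ is the number of shortest $k$–$l$ paths and, for an edge $uv$, $s^{kl}_{uv}$ is the number of those passing through the edge $uv$. The exponential edge betweenness of an edge $uv$ is $b^{e}_{\lambda}(uv)=\sum_{\{k,l\}}\frac{s^{kl}_{uv}}{s^{kl}}\lambda^{d(k,l)}$ over all unordered pairs $\{k,l\}$ of distinct vertices; the exponential betweenness centrality of a vertex $u$ is $c^{e}_{\lambda}(u)=\sum_{v\in[u]}b^{e}_{\lambda}(uv)$; and $mc^{e}_{\lambda}(G)=\min\{c^{e}_{\lambda}(u):u\in V(G)\}$. *)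

From mathcomp Require Import all_boot all_order all_algebra.
Set Implicit Arguments. Unset Strict Implicit. Unset Printing Implicit Defensive.
Import Order.TTheory GRing.Theory Num.Theory.

Section Graphs.
Variables (T : finType) (e : rel T).

Definition simple_graph := symmetric e /\ irreflexive e.
Definition connected_graph := forall x y : T, connect e x y.

(* Walks from k to l with exactly m edges: t is the list of vertices after k. *)
Definition walks (k l : T) (m : nat) : {set m.-tuple T} :=
  [set t : m.-tuple T | path e k t && (last k t == l)].

(* Graph distance: least length of a k-l walk (#|T| if none exists). *)
Definition gdist (k l : T) : nat :=
  \big[minn/#|T|]_(m < #|T| | walks k l m != set0) m.

(* Shortest k-l paths are exactly the k-l walks of length d(k,l). *)
Definition nb_sp (k l : T) : nat := #|walks k l (gdist k l)|.

Definition through (u v k : T) (t : seq T) : bool :=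
  has (fun p => (p == (u, v)) || (p == (v, u))) (zip (k :: t) t).

Definition nb_sp_through (u v k l : T) : nat :=
  #|[set t in walks k l (gdist k l) | through u v k t]|.

Variable (R : realFieldType) (lam : R).
Local Open Scope ring_scope.

(* Sum over unordered pairs {k,l}, k <> l, written as half the ordered sum. *)
Definition exp_edge_betw (u v : T) : R :=
  (2%:R)^-1 * \sum_(k : T) \sum_(l : T | l != k)
     ((nb_sp_through u v k l)%:R / (nb_sp k l)%:R) * lam ^+ gdist k l.

Definition exp_betw_cent (u : T) : R := \sum_(v : T | e u v) exp_edge_betw u v.

(* Minimum over all vertices (the seed is some c(u); irrelevant if T nonempty). *)
Definition mc_exp : R :=
  \big[Num.min/head 0%R [seq exp_betw_cent u | u <- enum T]]_(u : T) exp_betw_cent u.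

End Graphs.

Definition path_graph (n : nat) : rel 'I_n :=
  fun i j => (i.+1 == j :> nat) || (j.+1 == i :> nat).
Arguments path_graph n : clear implicits.

(* Fix a vertex u and split c(u) according to the pairs {k, l}.  Every shortest
   u-l path leaves u through exactly one edge at u, so the pairs {u, l} contribute
   exactly the sum of lam^d(u,l) over l <> u; the other pairs contribute a
   nonnegative amount, which vanishes when u has a single neighbour (a shortest
   path between two other vertices cannot pass through u).  In a connected graph
   on n vertices at least m vertices l <> u have d(u,l) <= m for every m < n
   (the first m vertices of a shortest path to a farther vertex, or else all of
   them), so Abel summation with 0 <= lam <= 1 bounds the sum from below by
   lam + ... + lam^(n-1) = (lam^n - lam) / (lam - 1).  For the path P_n and its
   end-vertex 0, d(0,l) >= l gives the reverse inequality. *)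

From mathcomp Require Import all_boot all_order all_algebra ring zify.
Import Order.TTheory GRing.Theory Num.Theory.

Set Implicit Arguments.
Unset Strict Implicit.
Unset Printing Implicit Defensive.

Lemma sum_card_fibres (I J : finType) (W : {set I}) (P : pred J)
    (Q : J -> I -> bool) (g : I -> J) :
  (forall t, t \in W -> P (g t)) ->
  (forall v t, P v -> t \in W -> Q v t = (g t == v)) ->
  \sum_(v | P v) #|[set t in W | Q v t]| = #|W|.
Proof.
move=> Pg Qg; rewrite -sum1_card (partition_big g P) //=.
apply: eq_bigr => v Pv; rewrite -sum1_card; apply: eq_bigl => t; rewrite inE.
by case: (boolP (t \in W)) => //= tW; rewrite Qg.
Qed.

Lemma card_ord_ltn_le n m : #|[pred i : 'I_n | i < m]| <= m.
Proof.
rewrite cardE -(size_map val) -[m in _ <= m](size_iota 0 m).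
apply: uniq_leq_size; first by rewrite (map_inj_uniq val_inj) enum_uniq.
by move=> x /mapP[i]; rewrite mem_enum inE => lt_im ->; rewrite mem_iota add0n lt_im.
Qed.

Section Sums.
Local Open Scope ring_scope.

Lemma sum_offdiag_split (I : finType) (V : nmodType) (u : I) (G : I -> I -> V) :
  \sum_k \sum_(l | l != k) G k l =
  \sum_(l | l != u) G u l + \sum_(k | k != u) G k u +
  \sum_(k | k != u) \sum_(l | (l != k) && (l != u)) G k l.
Proof.
rewrite (bigD1 u) //= -addrA; congr (_ + _); rewrite -big_split /=.
by apply: eq_bigr => k k_neq_u; rewrite (bigD1 u) 1?eq_sym.
Qed.

Lemma expr_telescope (R : pzRingType) (x : R) d N : (d <= N)%N ->
  x ^+ d = x ^+ N + \sum_(d <= j < N) (x ^+ j - x ^+ j.+1).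
Proof.
move=> le_dN; rewrite (telescope_sumr_eq (fun j => - x ^+ j)) //.
  by rewrite opprK addNKr.
by move=> j _; rewrite opprK addrC.
Qed.

Lemma sum_expr_count (R : pzRingType) (x : R) (I : finType) (P : pred I)
    (a : I -> nat) N :
  (forall i, P i -> a i <= N)%N ->
  \sum_(i | P i) x ^+ a i = x ^+ N *+ #|P| +
    \sum_(j < N) (x ^+ j - x ^+ j.+1) *+ #|[pred i | P i & a i <= j]%N|.
Proof.
move=> le_aN; rewrite (eq_bigr _ (fun i Pi => expr_telescope x (le_aN i Pi))).
rewrite big_split sumr_const /=; congr (_ + _).
rewrite (eq_bigr (fun i => \sum_(j < N | (a i <= j)%N) (x ^+ j - x ^+ j.+1))); last first.
  by move=> i _; rewrite big_geq_mkord.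
rewrite (exchange_big_dep xpredT) //=; apply: eq_bigr => j _.
by rewrite sumr_const.
Qed.

Lemma sum_expr_le_count (R : numDomainType) (x : R) (I J : finType)
    (P : pred I) (Q : pred J) (a : I -> nat) (b : J -> nat) N :
  0 <= x <= 1 -> #|P| = #|Q| ->
  (forall i, P i -> a i <= N)%N -> (forall j, Q j -> b j <= N)%N ->
  (forall m, m < N -> #|[pred j | Q j & b j <= m]| <= #|[pred i | P i & a i <= m]|)%N ->
  \sum_(j | Q j) x ^+ b j <= \sum_(i | P i) x ^+ a i.
Proof.
case/andP=> x_ge0 x_le1 eq_card le_aN le_bN le_count.
rewrite (sum_expr_count x le_aN) (sum_expr_count x le_bN) eq_card lerD2l.
apply: ler_sum => j _; apply: ler_wpMn2l; last exact: le_count.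
by rewrite subr_ge0 ler_wiXn2l.
Qed.

Lemma geometric_sumS (F : fieldType) (x : F) m : x != 1 ->
  (x ^+ m.+1 - x) / (x - 1) = \sum_(i < m) x ^+ i.+1.
Proof.
move=> x_neq1; have x1_neq0 : x - 1 != 0 by rewrite subr_eq0.
rewrite exprS -[X in _ - X]mulr1 -mulrBr subrX1 mulrCA mulrC mulKf // mulr_sumr.
by apply: eq_bigr => i _; rewrite exprS.
Qed.

End Sums.

Section Through.
Variable T : finType.
Implicit Types (u v k x : T) (s : seq T).

Lemma through_cons u v k x s :
  through u v k (x :: s) = [|| (k, x) == (u, v), (k, x) == (v, u) | through u v x s].
Proof. by rewrite /through /= orbA. Qed.

Lemma through_rcons u v k x s : through u v k (rcons s x) =
  [|| through u v k s, (last k s, x) == (u, v) | (last k s, x) == (v, u)].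
Proof.
elim: s k => [|y s IHs] k; first by rewrite /through /= orbF.
by rewrite rcons_cons !through_cons IHs !orbA.
Qed.

Lemma through_mem u v k s : through u v k s -> u \in k :: s.
Proof.
elim: s k => [//|x s IHs] k; rewrite through_cons !xpair_eqE.
case/or3P=> [/andP[/eqP-> _]|/andP[_ /eqP->]|/IHs]; rewrite !inE ?eqxx ?orbT //.
by move=> ->; rewrite orbT.
Qed.

End Through.

Section Geodesics.
Variables (T : finType) (e : rel T).
Implicit Types (k l u : T) (s : seq T).

Definition geodesic k s := path e k s && (gdist e k (last k s) == size s).

Lemma gdist_le_card k l : gdist e k l <= #|T|.
Proof. exact: (@bigmin_le_id _ nat). Qed.

Lemma gdist_le_size k s : path e k s -> gdist e k (last k s) <= size s.
Proof.
move=> walk_s; have [/(leq_trans (gdist_le_card _ _))//|lt_sT] := leqP #|T| (size s).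
apply: (@bigmin_le_cond _ nat _ _ (Ordinal lt_sT)) => /=.
by apply/set0Pn; exists (in_tuple s); rewrite inE walk_s eqxx.
Qed.

Lemma geodesic_walks k l (t : (gdist e k l).-tuple T) :
  (t \in walks e k l (gdist e k l)) = geodesic k t && (last k t == l).
Proof.
by rewrite inE /geodesic size_tuple andbAC; case: eqP => [->|_]; rewrite ?eqxx ?andbT ?andbF.
Qed.

Lemma shortest_walks_neq0 k l : gdist e k l < #|T| -> walks e k l (gdist e k l) != set0.
Proof.
rewrite /gdist; elim/big_ind: _ => [|m n IHm IHn|//]; first by rewrite ltnn.
by rewrite /minn; case: (ltnP m n).
Qed.

Lemma exists_geodesic k l : gdist e k l < #|T| ->
  exists2 s, geodesic k s & last k s = l.
Proof.
move=> /shortest_walks_neq0/set0Pn[t].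
by rewrite geodesic_walks => /andP[geo_t /eqP]; exists t.
Qed.

Lemma gdist_refl k : gdist e k k = 0.
Proof. by apply/eqP; rewrite -leqn0 (gdist_le_size (s := [::])). Qed.

Lemma geodesic_prefix k s1 s2 : geodesic k (s1 ++ s2) -> geodesic k s1.
Proof.
rewrite /geodesic cat_path last_cat size_cat => /andP[/andP[walk1 walk2] /eqP dist12].
rewrite walk1 eqn_leq gdist_le_size //= leqNgt; apply/negP => short.
have lt_d1T : gdist e k (last k s1) < #|T|.
  by rewrite (leq_trans short) // (leq_trans (leq_addr (size s2) _)) // -dist12 gdist_le_card.
have [s1' /andP[walk1' /eqP dist1'] last1'] := exists_geodesic lt_d1T.
have := @gdist_le_size k (s1' ++ s2).
rewrite cat_path walk1' last1' walk2 last_cat last1' dist12 size_cat -dist1' last1' leq_add2r.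
by rewrite leqNgt short => /(_ isT).
Qed.

Lemma geodesic_gdist k s : geodesic k s -> map (gdist e k) s = iota 1 (size s).
Proof.
elim/last_ind: s => [//|s x IHs]; rewrite -cats1 => geo_sx.
have /andP[_ /eqP] := geo_sx.
rewrite map_cat IHs ?(geodesic_prefix geo_sx) // last_cat !size_cat iotaD /= => ->.
by rewrite addnC.
Qed.

Lemma geodesic_uniq k s : geodesic k s -> uniq (k :: s).
Proof.
move=> /geodesic_gdist dist_s; apply: (@map_uniq _ _ (gdist e k)).
by rewrite /= gdist_refl dist_s; apply: (iota_uniq 0 (size s).+1).
Qed.

Lemma sum_nb_sp_through_source u l : l != u ->
  \sum_(v | e u v) nb_sp_through e u v u l = nb_sp e u l.
Proof.
move=> l_neq_u.
have first_step t : t \in walks e u l (gdist e u l) ->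
    exists x s, [/\ tval t = x :: s, e u x & u \notin x :: s].
  rewrite geodesic_walks; case def_t: (tval t) => [|x s] /andP[geo_t last_t].
    by move: last_t l_neq_u => /= /eqP->; rewrite eqxx.
  have /andP[/andP[ux _] _] := geo_t.
  by exists x, s; split=> //; case/andP: (geodesic_uniq geo_t).
rewrite /nb_sp_through /nb_sp.
apply: (sum_card_fibres (g := fun t : (gdist e u l).-tuple T => head u t)).
  by move=> t /first_step[x [s [-> ux _]]].
move=> v t uv /first_step[x [s [-> _ u_notin]]].
have x_neq_u : x != u by apply: contraNneq u_notin => ->; apply: mem_head.
rewrite through_cons (negbTE (contra (@through_mem _ u v x s) u_notin)) !xpair_eqE.
by rewrite eqxx (negbTE x_neq_u) andbF !orbF.
Qed.

End Geodesics.

Section SymmetricGraph.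
Variables (T : finType) (e : rel T).
Hypothesis e_sym : symmetric e.
Implicit Types (k l u v : T) (s : seq T).

Lemma sum_nb_sp_through_target u k : k != u ->
  \sum_(v | e u v) nb_sp_through e u v k u = nb_sp e k u.
Proof.
move=> k_neq_u.
have last_step t : t \in walks e k u (gdist e k u) ->
    exists s, [/\ tval t = rcons s u, e u (last k s) & u \notin k :: s].
  rewrite geodesic_walks; case/lastP def_t: (tval t) => [|s x] /andP[geo_t last_t].
    by move: last_t k_neq_u => /= /eqP->; rewrite eqxx.
  move: last_t geo_t; rewrite last_rcons => /eqP-> geo_t; exists s; split=> //.
    by have /andP[] := geo_t; rewrite rcons_path e_sym => /andP[].
  by have := geodesic_uniq geo_t; rewrite -rcons_cons rcons_uniq => /andP[].
rewrite /nb_sp_through /nb_sp.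
apply: (sum_card_fibres (g := fun t : (gdist e k u).-tuple T => last k (belast k t))).
  by move=> t /last_step[s [-> us _]]; rewrite belast_rcons.
move=> v t uv /last_step[s [-> _ u_notin]]; rewrite belast_rcons /=.
have last_neq_u : last k s != u by apply: contraNneq u_notin => <-; apply: mem_last.
rewrite through_rcons (negbTE (contra (@through_mem _ u v k s) u_notin)) /=.
by rewrite !xpair_eqE (negbTE last_neq_u) eqxx andbT.
Qed.

Lemma deg1_notin_geodesic u k s : (forall v w, e u v -> e u w -> v = w) ->
  geodesic e k s -> u != last k s -> u \notin s.
Proof.
move=> deg1 geo_s last_neq; apply/negP => u_in_s.
move: geo_s last_neq; case/splitPr: u_in_s => s1 s2.
case: s2 => [|b s2]; first by rewrite last_cat /= eqxx.
move=> geo_s _; have /andP[walk_s _] := geo_s.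
move: walk_s; rewrite cat_path /= => /and4P[_ au ub _].
have a_eq_b : last k s1 = b by apply: deg1 ub; rewrite e_sym.
have := geodesic_uniq geo_s; rewrite -cat_cons cat_uniq => /and3P[_ /hasPn/(_ b)].
by rewrite -a_eq_b mem_last !inE eqxx orbT => /(_ isT).
Qed.

End SymmetricGraph.

Section ConnectedGraph.
Variables (T : finType) (e : rel T).
Hypotheses (e_sym : symmetric e) (e_conn : connected_graph e).
Implicit Types (k l u v : T) (s : seq T).

Lemma gdist_lt_card k l : gdist e k l < #|T|.
Proof.
have /connectP[s walk_s ->] := e_conn k l.
case/shortenP: walk_s => s' walk_s' uniq_s' _.
apply: leq_ltn_trans (gdist_le_size walk_s') _.
by have := max_card (mem (k :: s')); rewrite (card_uniqP uniq_s').
Qed.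

Lemma gdist_sym k l : gdist e k l = gdist e l k.
Proof.
suff le_dist x y : gdist e y x <= gdist e x y by apply/eqP; rewrite eqn_leq !le_dist.
have [s /andP[walk_s /eqP dist_s] <-] := exists_geodesic (gdist_lt_card x y).
have walk_rev : path e (last x s) (rev (belast x s)).
  by rewrite rev_path (@eq_path _ _ e) // => a b; apply: e_sym.
have := gdist_le_size walk_rev; rewrite size_rev size_belast dist_s.
case/lastP: s {walk_s dist_s walk_rev} => [//|s z].
by rewrite belast_rcons rev_cons !last_rcons.
Qed.

Lemma nb_sp_gt0 k l : 0 < nb_sp e k l.
Proof. by rewrite card_gt0 shortest_walks_neq0 ?gdist_lt_card. Qed.

Lemma card_ball_ge u m : m < #|T| ->
  m <= #|[pred l | (l != u) && (gdist e u l <= m)]|.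
Proof.
move=> lt_mT; have [/existsP[l far_l]|/existsPn near] := boolP [exists l, m < gdist e u l].
  have [s geo_s last_s] := exists_geodesic (gdist_lt_card u l).
  have /andP[_ /eqP] := geo_s; rewrite last_s => dist_s.
  have /andP[u_notin_s uniq_s] := geodesic_uniq geo_s.
  have size_take : size (take m s) = m by rewrite size_takel // -dist_s ltnW.
  rewrite -{1}size_take -(card_uniqP (take_uniq m uniq_s)).
  apply/subset_leq_card/subsetP => x x_in; rewrite inE.
  rewrite (memPn u_notin_s _ (mem_take x_in)) /=.
  have := map_f (gdist e u) x_in; rewrite map_take (geodesic_gdist geo_s).
  by rewrite take_iota mem_iota; lia.
apply: (@leq_trans #|T|.-1); first by lia.
rewrite -(cardC1 u); apply/subset_leq_card/subsetP => l; rewrite !inE => l_neq_u.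
by rewrite l_neq_u leqNgt near.
Qed.

Variables (R : realFieldType) (lam : R).
Local Open Scope ring_scope.

Definition pair_dependency u v k l : R :=
  (nb_sp_through e u v k l)%:R / (nb_sp e k l)%:R * lam ^+ gdist e k l.

Definition exp_dist_sum u : R := \sum_(l | l != u) lam ^+ gdist e u l.

Lemma sum_pair_dependency u k l :
  (\sum_(v | e u v) nb_sp_through e u v k l = nb_sp e k l)%N ->
  \sum_(v | e u v) pair_dependency u v k l = lam ^+ gdist e k l.
Proof.
have nb_sp_neq0 : (nb_sp e k l)%:R != 0 :> R by rewrite pnatr_eq0 -lt0n nb_sp_gt0.
move=> sum_nb; rewrite /pair_dependency -mulr_suml -mulr_suml -natr_sum sum_nb.
by rewrite (divff nb_sp_neq0) mul1r.
Qed.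

Lemma exp_betw_centE u : exp_betw_cent e lam u = exp_dist_sum u +
  2%:R^-1 * \sum_(v | e u v) \sum_(k | k != u) \sum_(l | (l != k) && (l != u))
              pair_dependency u v k l.
Proof.
have from_u : \sum_(v | e u v) \sum_(l | l != u) pair_dependency u v u l = exp_dist_sum u.
  rewrite exchange_big; apply: eq_bigr => l l_neq_u.
  by apply: sum_pair_dependency; apply: sum_nb_sp_through_source.
have to_u : \sum_(v | e u v) \sum_(k | k != u) pair_dependency u v k u = exp_dist_sum u.
  rewrite exchange_big; apply: eq_bigr => k k_neq_u.
  by rewrite gdist_sym; apply: sum_pair_dependency; apply: sum_nb_sp_through_target.
rewrite /exp_betw_cent /exp_edge_betw.
under eq_bigr => v _ do rewrite (sum_offdiag_split u (pair_dependency u v)).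
by rewrite -mulr_sumr !big_split /= from_u to_u; field.
Qed.

Lemma exp_dist_sum_le_cent u : 0 <= lam -> exp_dist_sum u <= exp_betw_cent e lam u.
Proof.
move=> lam_ge0; rewrite exp_betw_centE lerDl mulr_ge0 ?invr_ge0 ?ler0n //.
by do 3!apply: sumr_ge0 => ? _; rewrite mulr_ge0 ?divr_ge0 ?exprn_ge0.
Qed.

Lemma exp_betw_cent_deg1 u : (forall v w, e u v -> e u w -> v = w) ->
  exp_betw_cent e lam u = exp_dist_sum u.
Proof.
move=> deg1; rewrite exp_betw_centE big1 ?mulr0 ?addr0 // => v _.
apply: big1 => k k_neq_u; apply: big1 => l /andP[_ l_neq_u].
rewrite /pair_dependency; suff -> : nb_sp_through e u v k l = 0%N by rewrite !mul0r.
apply/eqP; rewrite cards_eq0; apply/eqP/setP => t; rewrite in_set in_set0 geodesic_walks.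
apply/negbTE/andP => -[/andP[geo_t /eqP last_t] /through_mem].
rewrite inE eq_sym (negbTE k_neq_u) /=; apply/negP.
by apply: (deg1_notin_geodesic e_sym deg1 geo_t); rewrite last_t eq_sym.
Qed.

Lemma geom_le_exp_dist_sum u : 0 <= lam <= 1 ->
  \sum_(i < #|T|.-1) lam ^+ i.+1 <= exp_dist_sum u.
Proof.
move=> lam01; apply: (sum_expr_le_count (N := #|T|.-1)) => //.
- by rewrite card_ord -(cardC1 u); apply: eq_card => l; rewrite !inE.
- by move=> l _; have := gdist_lt_card u l; lia.
- move=> m lt_mN; apply: leq_trans (card_ord_ltn_le _ m) (card_ball_ge u _); lia.
Qed.

Lemma geom_le_exp_betw_cent u : 0 <= lam <= 1 ->
  \sum_(i < #|T|.-1) lam ^+ i.+1 <= exp_betw_cent e lam u.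
Proof.
move=> /[dup] /andP[lam_ge0 _] lam01.
exact: le_trans (geom_le_exp_dist_sum u lam01) (exp_dist_sum_le_cent u lam_ge0).
Qed.

End ConnectedGraph.

Lemma path_graph_sym n : symmetric (path_graph n).
Proof. by move=> i j; rewrite /path_graph orbC. Qed.

Lemma path_graph_walk_le n (x : 'I_n) s :
  path (path_graph n) x s -> last x s <= x + size s.
Proof.
elim: s x => [|y s IHs] x /=; first by rewrite addn0.
by case/andP=> /orP[] /eqP xy /IHs; lia.
Qed.

Lemma path_graph_connected n : connected_graph (path_graph n).
Proof.
case: n => [|n] x y; first by case: x.
have from0 k : k < n.+1 -> connect (path_graph n.+1) ord0 (inord k).
  elim: k => [_|k IHk lt_kn].
    by rewrite (_ : inord 0 = ord0) ?connect0 //; apply: val_inj; rewrite /= inordK.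
  apply: connect_trans (IHk (ltnW lt_kn)) (connect1 _).
  by rewrite /path_graph !inordK ?eqxx // ltnW.
rewrite -(inord_val x) -(inord_val y).
apply: (@connect_trans _ _ ord0); last exact: from0.
by rewrite (sym_connect_sym (@path_graph_sym _)) from0.
Qed.

Lemma path_graph_gdist_ord0 n (l : 'I_n.+1) : l <= gdist (path_graph n.+1) ord0 l.
Proof.
have [s /andP[walk_s /eqP dist_s] <-] :=
  exists_geodesic (gdist_lt_card (@path_graph_connected _) ord0 l).
by rewrite dist_s; apply: path_graph_walk_le.
Qed.

Lemma path_graph_ord0_deg1 n (v w : 'I_n.+1) :
  path_graph n.+1 ord0 v -> path_graph n.+1 ord0 w -> v = w.
Proof.
by rewrite /path_graph /= !orbF => /eqP v1 /eqP w1; apply: val_inj => /=; rewrite -v1 -w1.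
Qed.

Local Open Scope ring_scope.

(* [u0] makes the seed of the minimum in [mc_exp] a centrality value. *)
Lemma le_mc_exp (T : finType) (e : rel T) (R : realFieldType) (lam b : R) (u0 : T) :
  (forall u, b <= exp_betw_cent e lam u) -> b <= mc_exp e lam.
Proof.
move=> b_le; apply: le_bigmin => [|u _]; last exact: b_le.
have : u0 \in enum T by rewrite mem_enum.
by case: (enum T) => //= u _ _; apply: b_le.
Qed.

Lemma path_graph_cent_ord0 (R : realFieldType) (lam : R) n : 0 <= lam <= 1 ->
  exp_betw_cent (path_graph n.+1) lam ord0 = \sum_(i < n) lam ^+ i.+1.
Proof.
move=> /[dup] /andP[lam_ge0 lam_le1] lam01.
have [pg_sym pg_conn] := (@path_graph_sym n.+1, @path_graph_connected n.+1).
apply/le_anti/andP; split; last first.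
  by have := geom_le_exp_betw_cent pg_sym pg_conn ord0 lam01; rewrite card_ord.
rewrite (exp_betw_cent_deg1 pg_sym pg_conn _ (@path_graph_ord0_deg1 n)).
have -> : \sum_(i < n) lam ^+ i.+1 = \sum_(l : 'I_n.+1 | l != ord0) lam ^+ l.
  by rewrite [RHS]big_mkcond big_ord_recl /= add0r.
by apply: ler_sum => l _; apply: ler_wiXn2l => //; apply: path_graph_gdist_ord0.
Qed.

Theorem theorem6 (R : realFieldType) (lam : R) (n : nat) :
  0 < lam < 1 ->
  (forall (T : finType) (e : rel T),
      simple_graph e -> connected_graph e -> #|T| = n -> (0 < n)%N ->
      (lam ^+ n - lam) / (lam - 1) <= mc_exp e lam)
  /\
  ((0 < n)%N ->
      mc_exp (path_graph n) lam = (lam ^+ n - lam) / (lam - 1) /\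
      (forall v : 'I_n, val v = 0%N ->
         exp_betw_cent (path_graph n) lam v = (lam ^+ n - lam) / (lam - 1))).
Proof.
case/andP=> lam_gt0 lam_lt1; have lam01 : 0 <= lam <= 1 by rewrite !ltW.
have geomE m : (lam ^+ m.+1 - lam) / (lam - 1) = \sum_(i < m) lam ^+ i.+1.
  by rewrite geometric_sumS // lt_eqF.
split=> [T e [e_sym _] e_conn card_T n_gt0|].
  have /card_gt0P[u0 _] : (0 < #|T|)%N by rewrite card_T.
  rewrite -(prednK n_gt0) geomE -card_T; apply: (le_mc_exp u0) => u.
  exact: geom_le_exp_betw_cent.
case: n => [//|n] _; rewrite geomE -(path_graph_cent_ord0 n lam01).
split=> [|v v0]; last by rewrite (_ : v = ord0) //; apply: val_inj.
apply/le_anti/andP; split; first exact: bigmin_le.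
apply: (le_mc_exp ord0) => u; rewrite path_graph_cent_ord0 //.
have := geom_le_exp_betw_cent (@path_graph_sym _) (@path_graph_connected _) u lam01.
by rewrite card_ord.
Qed.
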